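(* Let $\Phi$ be an Orlicz function and $p$ a lattice norm on $\mathbb{R}^2$ with $p((1,0))=1$. Then the functional $$\|x\|_{\Phi,p}=\inf_{k>0}\frac1k\,p\big((1,I_\Phi(kx))\big),\qquad x\in L^\Phi(\mu),$$ is a norm on $L^\Phi(\mu)$.
   Context: $(\Omega,\Sigma,\mu)$ is a $\sigma$-finite complete measure space and $L^0$ denotes the space of (classes of $\mu$-a.e. equal) real-valued $\Sigma$-measurable functions on $\Omega$. An Orlicz function is a function $\Phi:\mathbb{R}\to[0,\infty)$ which is convex, even, vanishes at $0$ and is not identically zero. For $x\in L^0$, $I_\Phi(x)=\int_\Omega\Phi(x(t))\,d\mu\in[0,+\infty]$. The Orlicz space is $L^\Phi(\mu)=\{x\in L^0: I_\Phi(\lambda x)<\infty\text{ for some }\lambda>0\}$. A lattice norm on $\mathbb{R}^2$ is a norm $p$ such that $p((u,v))\le p((u',v'))$ whenever $|u|\le|u'|$, $|v|\le|v'|$. In the formula for $\|x\|_{\Phi,p}$ the convention $p((1,+\infty))=+\infty$ is used. *)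

From HB Require Import structures.
From mathcomp Require Import all_boot all_order all_algebra.
From mathcomp Require Import all_classical all_reals all_analysis.
Set Implicit Arguments. Unset Strict Implicit. Unset Printing Implicit Defensive.
Import Order.TTheory GRing.Theory Num.Theory.
Local Open Scope classical_set_scope.
Local Open Scope ring_scope.

Definition orlicz_function (R : realType) (Phi : R -> R) : Prop :=
  [/\ (forall u, 0 <= Phi u),
      (forall u v (t : R), 0 <= t -> t <= 1 ->
          Phi (t * u + (1 - t) * v) <= t * Phi u + (1 - t) * Phi v),
      (forall u, Phi (- u) = Phi u),
      Phi 0 = 0 &
      exists u, Phi u != 0].

Definition lattice_norm (R : realType) (p : R * R -> R) : Prop :=
  [/\ (forall w, p w = 0 -> w = (0, 0)),
      (forall (a : R) w, p (a * w.1, a * w.2) = `|a| * p w),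
      (forall w z, p (w.1 + z.1, w.2 + z.2) <= p w + p z) &
      (forall u v u' v', `|u| <= `|u'| -> `|v| <= `|v'| -> p (u, v) <= p (u', v'))].

Definition I_Phi d (T : measurableType d) (R : realType)
  (mu : {measure set T -> \bar R}) (Phi : R -> R) (x : T -> R) : \bar R :=
  (\int[mu]_t (Phi (x t))%:E)%E.

Definition in_orlicz d (T : measurableType d) (R : realType)
  (mu : {measure set T -> \bar R}) (Phi : R -> R) (x : T -> R) : Prop :=
  measurable_fun setT x /\
  exists lam : R, 0 < lam /\ (I_Phi mu Phi (fun t => (lam * x t)%R) < +oo)%E.

Definition p_one (R : realType) (p : R * R -> R) (s : \bar R) : \bar R :=
  match s with
  | EFin r => (p (1, r))%:E
  | +oo%E => +oo%E
  | -oo%E => -oo%E (* never used: I_Phi >= 0 *)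
  end.

Definition orlicz_p_norm d (T : measurableType d) (R : realType)
  (mu : {measure set T -> \bar R}) (Phi : R -> R) (p : R * R -> R)
  (x : T -> R) : \bar R :=
  ereal_inf [set ((k^-1)%:E * p_one p (I_Phi mu Phi (fun t => (k * x t)%R)))%E
            | k in [set k : R | 0 < k]].

(* Homogeneity follows by reparametrising k. For the triangle inequality take
   k = k1 k2 / (k1 + k2): then k (x + y) is the convex combination of k1 x and
   k2 y with weight s = k2 / (k1 + k2), and since s / k = 1 / k1 and
   (1 - s) / k = 1 / k2, convexity of I_Phi and of r |-> p (1, r) (which is
   nondecreasing on r >= 0) bound the k-th term for x + y by the sum of the
   k1-th term for x and the k2-th term for y.  For definiteness, if |x| >= de
   on a set of positive measure, small k give a term >= 1/k and large k give,
   since Phi u / u is nondecreasing, a modular I_Phi (k x) growing linearly in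
   k; so the infimum is positive. *)

From HB Require Import structures.
From mathcomp Require Import all_boot all_order all_algebra.
From mathcomp Require Import all_classical all_reals all_analysis.
From mathcomp Require Import ring lra measurable_realfun.
Set Implicit Arguments.
Unset Strict Implicit.
Unset Printing Implicit Defensive.
Import Order.TTheory GRing.Theory Num.Theory.
Local Open Scope classical_set_scope.
Local Open Scope ring_scope.

Section OrliczFunction.
Variables (R : realType) (Phi : R -> R).
Hypothesis HPhi : orlicz_function Phi.

Lemma orlicz_ge0 u : 0 <= Phi u.
Proof. by case: HPhi. Qed.

Lemma orlicz0 : Phi 0 = 0.
Proof. by case: HPhi. Qed.

Lemma orlicz_norm u : Phi `|u| = Phi u.
Proof.
case: HPhi => _ _ PhiN _ _.
have [u0|u0] := lerP 0 u; first by rewrite ger0_norm.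
by rewrite ltr0_norm // PhiN.
Qed.

Lemma orlicz_scale_le u t : 0 <= t <= 1 -> Phi (t * u) <= t * Phi u.
Proof.
case: HPhi => _ convex _ Phi0 _ /andP[t0 t1].
by have := convex u 0 t t0 t1; rewrite Phi0 !mulr0 !addr0.
Qed.

Lemma le_orlicz u v : 0 <= u <= v -> Phi u <= Phi v.
Proof.
case/andP=> u0 uv; have [v0|v0] := eqVneq v 0.
  by have -> : u = v by apply/eqP; rewrite eq_le uv v0 u0.
have vpos : 0 < v by rewrite lt_neqAle eq_sym v0 (le_trans u0 uv).
have uv1 : 0 <= u / v <= 1.
  by rewrite divr_ge0 ?(ltW vpos) //= ler_pdivrMr // mul1r.
rewrite -{1}(divfK v0 u); apply: le_trans (orlicz_scale_le v uv1) _.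
by rewrite ler_piMl ?orlicz_ge0 //; case/andP: uv1.
Qed.

Lemma le_orlicz_norm u v : `|u| <= `|v| -> Phi u <= Phi v.
Proof.
by move=> uv; rewrite -orlicz_norm -(orlicz_norm v) le_orlicz // normr_ge0.
Qed.

Lemma le_orlicz_ratio u v : 0 < u <= v -> Phi u / u <= Phi v / v.
Proof.
case/andP=> u0 uv; have v0 : 0 < v := lt_le_trans u0 uv.
have uv1 : 0 <= u / v <= 1.
  by rewrite divr_ge0 ?(ltW u0) ?(ltW v0) //= ler_pdivrMr // mul1r.
have := orlicz_scale_le v uv1; rewrite divfK ?gt_eqF // => Phi_uv.
by rewrite ler_pdivrMr // (le_trans Phi_uv) // mulrC mulrA mulrAC.
Qed.

Lemma orlicz_exists_gt0 : exists2 u, 0 < u & 0 < Phi u.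
Proof.
case: HPhi => _ _ _ Phi0 [u Phiu]; exists `|u|.
  by rewrite normr_gt0; apply: contra Phiu => /eqP ->; rewrite Phi0.
by rewrite orlicz_norm lt_neqAle eq_sym Phiu orlicz_ge0.
Qed.

Lemma measurable_orlicz d (T : measurableType d) (f : T -> R) :
  measurable_fun setT f -> measurable_fun setT (fun t => Phi (f t)).
Proof.
move=> mf; pose h u := Phi (Num.max u 0).
have h_nd : nondecreasing_fun h.
  move=> u v uv; apply: le_orlicz.
  by rewrite le_max lexx orbT /= ge_max !le_max uv lexx orbT.
have -> : (fun t => Phi (f t)) = h \o (fun t => `|f t|).
  by apply: funext => t; rewrite /h /= (max_idPl (normr_ge0 _)) orlicz_norm.
apply: measurableT_comp; first exact: nondecreasing_measurable.
exact: measurableT_comp.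
Qed.

End OrliczFunction.

Section LatticeNorm.
Variables (R : realType) (p : R * R -> R).
Hypothesis Hp : lattice_norm p.

Lemma lattice_norm_ge0 w : 0 <= p w.
Proof.
case: Hp => _ pZ _ p_le; case: w => u v.
have : p (0 * u, 0 * v) <= p (u, v) by apply: p_le; rewrite mul0r normr0.
by rewrite (pZ 0 (u, v)) normr0 mul0r.
Qed.

Lemma lattice_norm01_gt0 : 0 < p (0, 1).
Proof.
rewrite lt_neqAle lattice_norm_ge0 andbT eq_sym; apply/eqP.
by case: Hp => p_eq0 _ _ _ /p_eq0 [] /eqP; rewrite oner_eq0.
Qed.

Lemma lattice_norm_ge_fst r : p (1, 0) <= p (1, r).
Proof. by case: Hp => _ _ _ p_le; apply: p_le; rewrite ?normr0. Qed.

Lemma lattice_norm_ge_snd r : `|r| * p (0, 1) <= p (1, r).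
Proof.
case: Hp => _ pZ _ p_le; rewrite -(pZ r (0, 1)) /=.
by apply: p_le; rewrite ?mulr0 ?mulr1 ?normr0 ?normr1.
Qed.

Lemma lattice_norm_convex s r1 r2 q : 0 <= s <= 1 ->
  0 <= q <= s * r1 + (1 - s) * r2 ->
  p (1, q) <= s * p (1, r1) + (1 - s) * p (1, r2).
Proof.
case: Hp => _ pZ pD p_le /andP[s0 s1] /andP[q0 qle].
have s'0 : 0 <= 1 - s by rewrite subr_ge0.
apply: (@le_trans _ _ (p (1, s * r1 + (1 - s) * r2))).
  by apply: p_le; rewrite // (ger0_norm q0) ger0_norm // (le_trans q0).
have -> : s * p (1, r1) = p (s * 1, s * r1) by rewrite (pZ s (1, r1)) ger0_norm.
have -> : (1 - s) * p (1, r2) = p ((1 - s) * 1, (1 - s) * r2).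
  by rewrite (pZ _ (1, r2)) ger0_norm.
have := pD (s * 1, s * r1) ((1 - s) * 1, (1 - s) * r2).
by rewrite /= !mulr1 subrKC.
Qed.

Hypothesis Hp10 : p (1, 0) = 1.

Local Open Scope ereal_scope.

Lemma p_one_ge1 s : 0 <= s -> 1 <= p_one p s.
Proof.
by case: s => [r| |] //= _; rewrite ?leey // lee_fin -{1}Hp10 lattice_norm_ge_fst.
Qed.

Lemma p_one_ge0 s : 0 <= s -> 0 <= p_one p s.
Proof. by move=> s0; apply: le_trans (p_one_ge1 s0). Qed.

Lemma p_one_ge_snd (r : R) s : (0 <= r)%R -> r%:E <= s ->
  (r * p (0, 1))%:E <= p_one p s.
Proof.
case: s => [q| |] //= r0; rewrite ?leey // lee_fin => rq.
apply: le_trans (lattice_norm_ge_snd q).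
by rewrite ler_wpM2r ?lattice_norm_ge0 // (le_trans rq (ler_norm q)).
Qed.

Lemma p_one_convex (s : R) a b c : (0 < s < 1)%R ->
  0 <= a -> 0 <= b -> 0 <= c -> c <= s%:E * a + (1 - s)%:E * b ->
  p_one p c <= s%:E * p_one p a + (1 - s)%:E * p_one p b.
Proof.
case/andP=> s0 s1 a0 b0 c0; have s'0 : (0 < 1 - s)%R by rewrite subr_gt0.
have scaled_gtNy (t : R) u : (0 <= t)%R -> 0 <= u -> t%:E * p_one p u != -oo.
  move=> t0 u0; rewrite -ltNye (lt_le_trans (ltNyr 0)) //.
  by rewrite mule_ge0 ?p_one_ge0.
have p_one_y : p_one p +oo = +oo by [].
case: a a0 => [r1| |] // r10; last first.
  move=> _; rewrite p_one_y gt0_muley ?lte_fin // addye ?leey //.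
  by apply: scaled_gtNy => //; exact: ltW.
case: b b0 => [r2| |] // r20; last first.
  by move=> _; rewrite p_one_y gt0_muley ?lte_fin // addey ?leey //.
rewrite -!EFinM -EFinD; case: c c0 => [q| |] //=; rewrite !lee_fin => q0 qle.
by apply: lattice_norm_convex; rewrite ?q0 ?qle ?ltW.
Qed.

End LatticeNorm.

Section Modular.
Context d (T : measurableType d) (R : realType) (mu : {measure set T -> \bar R}).
Variable Phi : R -> R.
Hypothesis HPhi : orlicz_function Phi.
Local Notation I := (I_Phi mu Phi).
Local Open Scope ereal_scope.

Lemma measurable_orlicz_EFin (f : T -> R) : measurable_fun setT f ->
  measurable_fun setT (fun t => (Phi (f t))%:E).
Proof. by move=> mf; apply/measurable_EFinP; exact: measurable_orlicz. Qed.

Lemma I_Phi_ge0 (f : T -> R) : 0 <= I f.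
Proof. by apply: integral_ge0 => t _; rewrite lee_fin orlicz_ge0. Qed.

Lemma I_Phi0 : I (fun=> 0%R) = 0.
Proof.
by rewrite /I_Phi (eq_integral (cst 0)) ?integral0 // => t _; rewrite orlicz0.
Qed.

Lemma eq_I_Phi_norm (f g : T -> R) : (forall t, `|f t| = `|g t|)%R -> I f = I g.
Proof.
move=> fg; apply: eq_integral => t _.
by rewrite -(orlicz_norm HPhi) fg orlicz_norm.
Qed.

Lemma I_Phi_ae_eq (f g : T -> R) :
  measurable_fun setT f -> measurable_fun setT g ->
  {ae mu, forall t, f t = g t} -> I f = I g.
Proof.
move=> mf mg fg; apply: ae_eq_integral => //; try exact: measurable_orlicz_EFin.
by apply: filterS fg => t /= -> _.
Qed.

Lemma I_Phi_convex (f g : T -> R) (s : R) :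
  measurable_fun setT f -> measurable_fun setT g -> (0 <= s <= 1)%R ->
  I (fun t => s * f t + (1 - s) * g t)%R <= s%:E * I f + (1 - s)%:E * I g.
Proof.
move=> mf mg /andP[s0 s1]; have s'0 : (0 <= 1 - s)%R by rewrite subr_ge0.
have Phi_ge0 h t : 0 <= (Phi (h t))%:E by rewrite lee_fin orlicz_ge0.
have mPf := measurable_orlicz_EFin mf; have mPg := measurable_orlicz_EFin mg.
rewrite /I_Phi -(ge0_integralZl_EFin _ _ _ mPf s0) //.
rewrite -(ge0_integralZl_EFin _ _ _ mPg s'0) // -ge0_integralD //; last 4 first.
- by move=> t _; rewrite mule_ge0.
- exact: measurable_funeM.
- by move=> t _; rewrite mule_ge0.
- exact: measurable_funeM.
apply: ge0_le_integral => //.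
- apply: measurable_orlicz_EFin; apply: measurable_funD; exact: measurable_funM.
- by apply: emeasurable_funD; exact: measurable_funeM.
- case: HPhi => _ convex _ _ _ t _.
  by rewrite -!EFinM -EFinD lee_fin convex.
Qed.

Lemma I_Phi_ge_level (f : T -> R) (A : set T) (c : R) :
  measurable A -> measurable_fun setT f ->
  (forall t, A t -> `|c| <= `|f t|)%R -> (Phi c)%:E * mu A <= I f.
Proof.
move=> mA mf cf; rewrite -integral_cst //.
apply: le_trans (ge0_subset_integral _ _ _ _ _ (subsetT A)) => //; last first.
- by move=> t _; rewrite lee_fin orlicz_ge0.
- exact: measurable_orlicz_EFin.
apply: ge0_le_integral => //.
- by move=> t _; rewrite lee_fin orlicz_ge0.
- exact: measurable_funS (measurable_orlicz_EFin mf).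
- by move=> t At; rewrite lee_fin le_orlicz_norm ?cf.
Qed.

End Modular.

Section AmemiyaNorm.
Context d (T : measurableType d) (R : realType) (mu : {measure set T -> \bar R}).
Variables (Phi : R -> R) (p : R * R -> R).
Hypotheses (HPhi : orlicz_function Phi) (Hp : lattice_norm p).
Hypothesis Hp10 : p (1, 0) = 1.
Local Notation I := (I_Phi mu Phi).
Local Notation N := (orlicz_p_norm mu Phi p).
Implicit Types x y : T -> R.
Local Open Scope ereal_scope.

Definition amemiya (x : T -> R) (k : R) : \bar R :=
  (k^-1)%:E * p_one p (I (fun t => k * x t)%R).

Lemma orlicz_p_norm_le x k : (0 < k)%R -> N x <= amemiya x k.
Proof. by move=> k0; apply: ereal_inf_lbound; exists k. Qed.

Lemma orlicz_p_norm_ge x e :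
  (forall k : R, (0 < k)%R -> e <= amemiya x k) -> e <= N x.
Proof. by move=> ek; apply/ereal_infP => _ [k /= k0 <-]; exact: ek. Qed.

Lemma orlicz_p_norm_lt x e :
  N x < e -> exists2 k : R, (0 < k)%R & amemiya x k < e.
Proof. by case/ereal_inf_lt => _ [k /= k0 <-]; exists k. Qed.

Lemma amemiya_ge_inv x k : (0 < k)%R -> (k^-1)%:E <= amemiya x k.
Proof.
move=> k0; rewrite -[leLHS]mule1; apply: lee_wpmul2l.
  by rewrite lee_fin invr_ge0 ltW.
by apply: p_one_ge1 => //; exact: I_Phi_ge0.
Qed.

Lemma amemiya_ge_snd x k (r : R) : (0 < k)%R -> (0 <= r)%R ->
  r%:E <= I (fun t => k * x t)%R ->
  (k^-1 * (r * p (0%R, 1%R)))%:E <= amemiya x k.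
Proof.
move=> k0 r0 rI; rewrite /amemiya EFinM; apply: lee_wpmul2l.
  by rewrite lee_fin invr_ge0 ltW.
exact: p_one_ge_snd.
Qed.

Lemma orlicz_p_norm_ge0 x : 0 <= N x.
Proof.
apply: orlicz_p_norm_ge => k k0; apply: le_trans (amemiya_ge_inv x k0).
by rewrite lee_fin invr_ge0 ltW.
Qed.

Lemma orlicz_p_norm_fin x : in_orlicz mu Phi x ->
  exists r : R, (0 <= r)%R /\ N x = r%:E.
Proof.
case=> _ [lam [lam0 Ifin]]; have := orlicz_p_norm_le x lam0; rewrite /amemiya.
move: Ifin (orlicz_p_norm_ge0 x) (I_Phi_ge0 mu HPhi (fun t => lam * x t)%R).
case: (I _) => [r| |] //= _.
by case: (N x) => [q| |] //= q0 _; exists q; split; rewrite // -lee_fin.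
Qed.

Lemma orlicz_p_norm0 : N (fun=> 0%R) = 0.
Proof.
apply/eqP; rewrite eq_le orlicz_p_norm_ge0 andbT; apply/lee_addgt0Pr => e e0.
have e'0 : (0 < e^-1)%R by rewrite invr_gt0.
rewrite add0e; apply: le_trans (orlicz_p_norm_le _ e'0) _.
by rewrite /amemiya mulr0 (I_Phi0 _ HPhi) /= Hp10 invrK mule1.
Qed.

Lemma orlicz_p_norm_ae_eq x y :
  measurable_fun setT x -> measurable_fun setT y ->
  {ae mu, forall t, x t = y t} -> N x = N y.
Proof.
move=> mx my xy; congr ereal_inf; apply: eq_imagel => k _.
congr (_ * p_one p _); apply: (I_Phi_ae_eq HPhi).
- exact: measurable_funM.
- exact: measurable_funM.
- by apply: filterS xy => t /= ->.
Qed.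

Lemma amemiyaZ x (a k : R) : a != 0%R ->
  amemiya (fun t => a * x t)%R (k / `|a|) = `|a|%:E * amemiya x k.
Proof.
move=> a0; rewrite /amemiya invf_div EFinM -muleA; congr (_ * (_ * p_one p _)).
apply: (eq_I_Phi_norm _ HPhi) => t.
by rewrite !normrM normfV normr_id mulrA divfK // normr_eq0.
Qed.

Lemma orlicz_p_normZ_le x (a : R) : N (fun t => a * x t)%R <= `|a|%:E * N x.
Proof.
have [->|a0] := eqVneq a 0%R.
  by rewrite normr0 mul0e (_ : (fun t => _) = fun=> 0%R) ?orlicz_p_norm0 //;
    apply: funext => t; rewrite mul0r.
have a_gt0 : (0 < `|a|)%R by rewrite normr_gt0.
rewrite -lee_pdivrMl //; apply: orlicz_p_norm_ge => k k0.
rewrite lee_pdivrMl // -amemiyaZ //; apply: orlicz_p_norm_le.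
by rewrite divr_gt0.
Qed.

Lemma orlicz_p_normZ x (a : R) : N (fun t => a * x t)%R = `|a|%:E * N x.
Proof.
apply/eqP; rewrite eq_le orlicz_p_normZ_le /=.
have [->|a0] := eqVneq a 0%R; first by rewrite normr0 mul0e orlicz_p_norm_ge0.
have := orlicz_p_normZ_le (fun t => a * x t)%R a^-1.
rewrite (_ : (fun t => _) = x); last by apply: funext => t; rewrite mulKf.
by rewrite normfV lee_pdivlMl // normr_gt0.
Qed.

Lemma amemiyaD x y (k1 k2 : R) :
  measurable_fun setT x -> measurable_fun setT y -> (0 < k1)%R -> (0 < k2)%R ->
  amemiya (fun t => x t + y t)%R (k1 * k2 / (k1 + k2)) <=
  amemiya x k1 + amemiya y k2.
Proof.
move=> mx my k10 k20; have k12 : (0 < k1 + k2)%R by rewrite addr_gt0.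
set k := (k1 * k2 / _)%R; set s := (k2 / (k1 + k2))%R.
have s01 : (0 < s < 1)%R by rewrite divr_gt0 //= ltr_pdivrMr // mul1r ltrDr.
have kxy : (fun t => k * (x t + y t))%R =
           (fun t => s * (k1 * x t) + (1 - s) * (k2 * y t))%R.
  by apply: funext => t; rewrite /k /s; field; rewrite gt_eqF.
have ks : (k^-1 * s = k1^-1)%R by rewrite /k /s; field; rewrite !gt_eqF.
have ks' : (k^-1 * (1 - s) = k2^-1)%R by rewrite /k /s; field; rewrite !gt_eqF.
rewrite /amemiya kxy.
have mkx : measurable_fun setT (fun t => k1 * x t)%R by exact: measurable_funM.
have mky : measurable_fun setT (fun t => k2 * y t)%R by exact: measurable_funM.
have s01w : (0 <= s <= 1)%R by case/andP: s01 => s0 s1; rewrite !ltW.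
have convI := I_Phi_convex mu HPhi mkx mky s01w.
have convp := p_one_convex Hp Hp10 s01 (I_Phi_ge0 mu HPhi _)
  (I_Phi_ge0 mu HPhi _) (I_Phi_ge0 mu HPhi _) convI.
apply: le_trans (lee_wpmul2l _ convp) _.
  by rewrite lee_fin invr_ge0 ltW // divr_gt0 ?mulr_gt0.
have [s0 s1] := andP s01w.
by rewrite ge0_muleDr ?mule_ge0 ?p_one_ge0 ?I_Phi_ge0 ?lee_fin ?subr_ge0 //
  !muleA -!EFinM ks ks'.
Qed.

Lemma orlicz_p_normD x y : in_orlicz mu Phi x -> in_orlicz mu Phi y ->
  N (fun t => x t + y t)%R <= N x + N y.
Proof.
move=> ox oy; have [r1 [_ Nx]] := orlicz_p_norm_fin ox.
have [r2 [_ Ny]] := orlicz_p_norm_fin oy.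
case: ox oy => mx _ [my _]; rewrite Nx Ny; apply/lee_addgt0Pr => e e0.
have e20 : (0 < e / 2)%R by rewrite divr_gt0.
have [k1 k10 lt1] : exists2 k1 : R, (0 < k1)%R & amemiya x k1 < (r1 + e / 2)%:E.
  by apply: orlicz_p_norm_lt; rewrite Nx lte_fin ltrDl.
have [k2 k20 lt2] : exists2 k2 : R, (0 < k2)%R & amemiya y k2 < (r2 + e / 2)%:E.
  by apply: orlicz_p_norm_lt; rewrite Ny lte_fin ltrDl.
apply: le_trans (orlicz_p_norm_le _ (_ : 0 < k1 * k2 / (k1 + k2))%R) _.
  by rewrite divr_gt0 ?mulr_gt0 ?addr_gt0.
apply: le_trans (amemiyaD mx my k10 k20) _.
by apply: le_trans (ltW (lteD lt1 lt2)) _; rewrite -!EFinD lee_fin; lra.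
Qed.

Lemma orlicz_p_norm_gt0 x (A : set T) (de : R) :
  measurable_fun setT x -> measurable A -> (0 < de)%R ->
  (forall t, A t -> de <= `|x t|)%R -> 0 < mu A -> 0 < N x.
Proof.
move=> mx mA de0 Ax muA_gt0.
have [m m0 m_muA] : exists2 m : R, (0 < m)%R & m%:E <= mu A.
  move: muA_gt0; case: (mu A) => [r| |] //= r0; last first.
    by exists 1%R; rewrite ?leey.
  by exists r; rewrite // -lte_fin.
have [u0 u00 Phiu0] := orlicz_exists_gt0 HPhi.
pose a := (Phi u0 / u0)%R; have a0 : (0 < a)%R by rewrite divr_gt0.
have c0 : (0 < p (0%R, 1%R))%R := lattice_norm01_gt0 Hp.
pose eps := Num.min (de / u0)%R (a * de * m * p (0%R, 1%R))%R.
have eps0 : (0 < eps)%R by rewrite lt_min !(divr_gt0, mulr_gt0).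
apply: (@lt_le_trans _ _ eps%:E); first by rewrite lte_fin.
apply: orlicz_p_norm_ge => k k0; have [small|large] := ltP (k * de)%R u0.
  apply: le_trans (amemiya_ge_inv x k0); rewrite lee_fin ge_min.
  by rewrite ler_pdivrMr // ler_pdivlMl // ltW.
have kde0 : (0 < k * de)%R by rewrite mulr_gt0.
have slope : (a * (k * de) <= Phi (k * de))%R.
  by rewrite -ler_pdivlMr // le_orlicz_ratio // u00.
have akde0 : (0 <= a * (k * de))%R by rewrite mulr_ge0 ?ltW.
have I_ge : (a * (k * de) * m)%:E <= I (fun t => k * x t)%R.
  apply: le_trans (I_Phi_ge_level mu HPhi (c := k * de) mA _ _).
  - by rewrite EFinM lee_pmul ?lee_fin ?(ltW m0).
  - exact: measurable_funM.
  - move=> t At; rewrite (gtr0_norm kde0) normrM (gtr0_norm k0).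
    by rewrite ler_wpM2l ?(ltW k0) ?Ax.
apply: le_trans (amemiya_ge_snd k0 (mulr_ge0 akde0 (ltW m0)) I_ge).
have -> : (k^-1 * (a * (k * de) * m * p (0%R, 1%R)) =
           a * de * m * p (0%R, 1%R))%R by field; rewrite gt_eqF.
by rewrite lee_fin ge_min lexx orbT.
Qed.

Lemma orlicz_p_norm_eq0 x : measurable_fun setT x -> N x = 0 ->
  {ae mu, forall t, x t = 0%R}.
Proof.
move=> mx Nx0.
pose A n := (fun t => `|x t|%R) @^-1` `[(n.+1%:R^-1)%R, +oo[%classic.
have mA n : measurable (A n).
  rewrite -(setTI (A n)).
  by apply: (measurableT_comp _ mx) => //; exact: measurable_itv.
have A_null n : mu (A n) = 0.
  apply/eqP; rewrite eq_le measure_ge0 andbT leNgt; apply/negP => muA.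
  have de0 : (0 < n.+1%:R^-1 :> R)%R by rewrite invr_gt0.
  suff : 0 < N x by rewrite Nx0 ltxx.
  apply: (orlicz_p_norm_gt0 mx (mA n) de0) => // t.
  by rewrite /A /= in_itv /= andbT.
change (mu.-negligible (~` [set t | x t = 0%R])).
apply: (@negligibleS _ _ _ mu (\bigcup_n A n)).
  move=> t /= xt0; have ax : (0 < `|x t|)%R by rewrite normr_gt0; apply/eqP.
  exists (Num.truncn (`|x t|^-1))%R => //.
  rewrite /A /= in_itv /= andbT ltW // -invf_plt ?posrE ?ltr0Sn ?invr_gt0 //.
  exact: truncnS_gt.
by apply: negligible_bigcup => n; exists (A n); split.
Qed.

End AmemiyaNorm.

Theorem theorem2 (d : measure_display) (T : measurableType d) (R : realType)
  (mu : {measure set T -> \bar R})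
  (Hsf : sigma_finite setT mu) (Hcomplete : measure_is_complete mu)
  (Phi : R -> R) (p : R * R -> R)
  (HPhi : orlicz_function Phi) (Hp : lattice_norm p) (Hp10 : p (1, 0) = 1) :
  (forall x y, in_orlicz mu Phi x -> in_orlicz mu Phi y ->
     {ae mu, forall t, (x t = y t)%R} ->
     orlicz_p_norm mu Phi p x = orlicz_p_norm mu Phi p y) /\
  (forall x, in_orlicz mu Phi x ->
     exists r : R, 0 <= r /\ orlicz_p_norm mu Phi p x = r%:E) /\
  (forall x, in_orlicz mu Phi x ->
     (orlicz_p_norm mu Phi p x = 0%E <-> {ae mu, forall t, x t = 0%R})) /\
  (forall x (a : R), in_orlicz mu Phi x ->
     orlicz_p_norm mu Phi p (fun t => a * x t) = (`|a|%:E * orlicz_p_norm mu Phi p x)%E) /\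
  (forall x y, in_orlicz mu Phi x -> in_orlicz mu Phi y ->
     (orlicz_p_norm mu Phi p (fun t => (x t + y t)%R)
       <= orlicz_p_norm mu Phi p x + orlicz_p_norm mu Phi p y)%E).
Proof.
split; first by move=> x y [mx _] [my _]; exact: orlicz_p_norm_ae_eq.
split; first by move=> x; exact: orlicz_p_norm_fin.
split.
  move=> x [mx _]; split; first exact: orlicz_p_norm_eq0.
  move=> x_ae0; transitivity (orlicz_p_norm mu Phi p (fun=> 0%R)).
    by apply: orlicz_p_norm_ae_eq => //; exact: measurable_cst.
  exact: orlicz_p_norm0.
split; first by move=> x a _; exact: orlicz_p_normZ.
by move=> x y; exact: orlicz_p_normD.
Qed.
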